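(* Let $G$ be a connected graph in $\mathcal{C}$ and $C$ an induced $C_5$ in $G$ with vertices $0,\dots,4$ in cyclic order. Suppose that for some $i$ the sets $X_i, X_{i+1}, X_{i+2}$ are all nonempty, and let $\{j,k,\ell\}=\{i,i+1,i+2\}$. If $|X_j|\ge 3$, then $|X_k|=|X_\ell|=1$.
   Context: $\mathcal{C}=\mathrm{Free}(\text{claw}, 4K_1, \text{5-wheel}, C_5\text{-twin}, P_5\text{-twin}, K_5-e)$, where $\mathrm{Free}(L)$ is the class of graphs with no induced subgraph isomorphic to a member of $L$; the claw is $K_{1,3}$; $4K_1$ is the edgeless graph on 4 vertices; the 5-wheel is $C_5$ plus a vertex adjacent to all five cycle vertices; the $C_5$-twin is $C_5$ plus a new vertex adjacent to one cycle vertex $v$ and both cycle-neighbours of $v$; the $P_5$-twin is a path $p_1p_2p_3p_4p_5$ plus a new vertex adjacent to exactly $p_2,p_3,p_4$; $K_5-e$ is $K_5$ minus one edge. Given an induced cycle $C$ of length 5 with vertices $0,\dots,4$ in cyclic order (indices taken mod 5): $R$ is the set of vertices outside $C$ with no neighbour in $C$; $X_j$ is the set of vertices outside $C$ whose neighbourhood in $C$ is exactly $\{j,j+1\}$; $Y_j$ is the set of vertices outside $C$ whose neighbourhood in $C$ is exactly $\{j,j+1,j+2,j+3\}$; $X=\bigcup_j X_j$, $Y=\bigcup_j Y_j$. *)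

From mathcomp Require Import all_boot.
Set Implicit Arguments. Unset Strict Implicit. Unset Printing Implicit Defensive.

Definition simple_graph (T : finType) (e : rel T) : Prop :=
  symmetric e /\ irreflexive e.

Definition connected_graph (T : finType) (e : rel T) : Prop :=
  forall x y : T, connect e x y.

Definition mkpat (n : nat) (s : seq (nat * nat)) : rel 'I_n :=
  fun a b => ((val a, val b) \in s) || ((val b, val a) \in s).
Arguments mkpat : clear implicits.

Definition has_induced (T : finType) (e : rel T) (n : nat) (h : rel 'I_n) : Prop :=
  exists f : 'I_n -> T, injective f /\ forall a b, e (f a) (f b) = h a b.

Definition claw : rel 'I_4 := mkpat 4 [:: (0,1); (0,2); (0,3)].
Definition fourK1 : rel 'I_4 := mkpat 4 [::].
Definition c5_edges : seq (nat * nat) := [:: (0,1); (1,2); (2,3); (3,4); (4,0)].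
Definition wheel5 : rel 'I_6 :=
  mkpat 6 (c5_edges ++ [:: (5,0); (5,1); (5,2); (5,3); (5,4)]).
Definition c5_twin : rel 'I_6 := mkpat 6 (c5_edges ++ [:: (5,0); (5,1); (5,4)]).
Definition p5_twin : rel 'I_6 :=
  mkpat 6 [:: (0,1); (1,2); (2,3); (3,4); (5,1); (5,2); (5,3)].
Definition K5_minus_e : rel 'I_5 :=
  mkpat 5 [:: (0,2); (0,3); (0,4); (1,2); (1,3); (1,4); (2,3); (2,4); (3,4)].

Definition in_class_C (T : finType) (e : rel T) : Prop :=
  ~ has_induced e claw /\ ~ has_induced e fourK1 /\ ~ has_induced e wheel5 /\
  ~ has_induced e c5_twin /\ ~ has_induced e p5_twin /\ ~ has_induced e K5_minus_e.

Definition succ5 (j : 'I_5) : 'I_5 := inord ((j + 1) %% 5).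

Definition induced_C5 (T : finType) (e : rel T) (c : 'I_5 -> T) : Prop :=
  injective c /\ forall a b, e (c a) (c b) = (b == succ5 a) || (a == succ5 b).

Definition Xset (T : finType) (e : rel T) (c : 'I_5 -> T) (j : 'I_5) : {set T} :=
  [set v | (v \notin codom c) && ([set i | e v (c i)] == [set j; succ5 j])].

(* Rotating C so that the class at hand becomes X_0, small configurations
   show that each X_a is a clique (else a 4K1 together with cycle vertices 2
   and 4), that no vertex of another X_b has two neighbours in X_a (else a
   K5-e or a C5-twin), and that vertices taken from X_i, X_(i+1), X_(i+2)
   always span an odd number of edges (else a claw, a 4K1 or a P5-twin).
   Now let z be in X_l.  It misses two vertices u, u' of X_j and, if
   |X_k| >= 2, also some vertex w of X_k; by parity w is adjacent to both u
   and u', which is impossible. *)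

From mathcomp Require Import all_boot ssralg zmodp.
Set Implicit Arguments. Unset Strict Implicit. Unset Printing Implicit Defensive.
Import GRing.Theory.

Lemma succ5E (j : 'I_5) : succ5 j = (j + 1)%R.
Proof. by apply: val_inj; rewrite /= inordK ?ltn_pmod. Qed.

Lemma has_induced_seq (T : finType) (e : rel T) n (h : rel 'I_n) (x0 : T) (s : seq T) :
  size s = n -> uniq s -> (forall a b : 'I_n, e (nth x0 s a) (nth x0 s b) = h a b) ->
  has_induced e h.
Proof.
move=> size_s uniq_s adj_s; exists (fun a => nth x0 s a); split=> // a b /eqP.
by rewrite nth_uniq ?size_s // => /eqP /val_inj.
Qed.

Definition odd_triangle (T : Type) (e : rel T) (x y z : T) := e x y (+) e y z (+) e z x.

Section OddTriangle.
Variables (T : Type) (e : rel T).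
Hypothesis e_sym : symmetric e.

Lemma odd_triangle_rot x y z : odd_triangle e x y z = odd_triangle e y z x.
Proof. by rewrite /odd_triangle -addbA addbC. Qed.

Lemma odd_triangle_swap x y z : odd_triangle e x y z = odd_triangle e x z y.
Proof.
rewrite /odd_triangle (e_sym x z) (e_sym z y) (e_sym y x).
by case: (e x y); case: (e y z); case: (e z x).
Qed.

End OddTriangle.

Section InducedCycle.
Local Open Scope ring_scope.
Variables (T : finType) (e : rel T) (c : 'I_5 -> T).
Hypothesis c_ind : induced_C5 e c.

Lemma cycle_inj : injective c. Proof. by case: c_ind. Qed.

Lemma cycle_adj s t : e (c s) (c t) = (t == s + 1) || (s == t + 1).
Proof. by case: c_ind => _ ->; rewrite !succ5E. Qed.

Lemma XsetP a v :
  reflect (v \notin codom c /\ forall t, e v (c t) = (t == a) || (t == a + 1))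
          (v \in Xset e c a).
Proof.
rewrite inE succ5E; apply: (iffP andP) => -[v_out Nv]; split=> //.
  by move=> t; move/eqP/setP/(_ t): Nv; rewrite !inE.
by apply/eqP/setP => t; rewrite !inE Nv.
Qed.

Section Member.
Variables (a : 'I_5) (v : T).
Hypothesis Xv : v \in Xset e c a.

Lemma X_adj t : e v (c t) = (t == a) || (t == a + 1).
Proof. by case/XsetP: Xv. Qed.

Lemma X_neq_cycle t : (v == c t) = false.
Proof.
case/XsetP: Xv => /negP v_out _; apply/negP => /eqP v_ct.
by apply: v_out; rewrite v_ct codom_f.
Qed.

Lemma cycle_neq_X t : (c t == v) = false.
Proof. by rewrite eq_sym X_neq_cycle. Qed.

End Member.

Lemma X_neq a b u v : u \in Xset e c a -> v \in Xset e c b -> a != b -> (u == v) = false.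
Proof.
move=> Xu Xv neq_ab; apply/negP => /eqP eq_uv; subst v.
have : e u (c a) by rewrite (X_adj Xu) eqxx.
rewrite (X_adj Xv) (negbTE neq_ab) => /eqP a_def.
have : e u (c (a + 1)) by rewrite (X_adj Xu) eqxx orbT.
have shift x : (b + x == b) = (x == 0) by rewrite -{2}[b]addr0 (inj_eq (addrI _)).
by rewrite (X_adj Xv) a_def (inj_eq (addIr _)) -addrA !shift.
Qed.
End InducedCycle.

Section Rotation.
Local Open Scope ring_scope.
Variables (T : finType) (e : rel T) (c : 'I_5 -> T) (a : 'I_5).
Hypothesis c_ind : induced_C5 e c.

Lemma induced_C5_rot : induced_C5 e (fun t => c (t + a)).
Proof.
split=> [s t /(cycle_inj c_ind) /addIr // | s t].
rewrite (cycle_adj c_ind) !succ5E [s + a + 1]addrAC [t + a + 1]addrAC.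
by rewrite !(inj_eq (addIr _)).
Qed.

Lemma Xset_rot t : Xset e (fun s => c (s + a)) t = Xset e c (t + a).
Proof.
apply/setP => v; apply/XsetP/XsetP => -[v_out Nv]; split.
- apply: contra v_out => /codomP [s ->].
  by apply/codomP; exists (s - a); rewrite subrK.
- by move=> s; rewrite -{1}[s](subrK a) Nv !subr_eq [t + a + 1]addrAC.
- by apply: contra v_out => /codomP [s ->]; apply: codom_f.
- by move=> s; rewrite Nv [t + a + 1]addrAC !(inj_eq (addIr _)).
Qed.

End Rotation.

Section AroundClass0.
Local Open Scope ring_scope.
Variables (T : finType) (e : rel T) (c : 'I_5 -> T).
Hypotheses (e_simple : simple_graph e) (c_ind : induced_C5 e c).
Hypotheses (no_claw : ~ has_induced e claw) (no_4K1 : ~ has_induced e fourK1)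
  (no_C5_twin : ~ has_induced e c5_twin) (no_P5_twin : ~ has_induced e p5_twin)
  (no_K5_minus_e : ~ has_induced e K5_minus_e).

Let e_sym : symmetric e := e_simple.1.
Let e_irr : irreflexive e := e_simple.2.

Lemma X_adjC a v : v \in Xset e c a -> forall t, e (c t) v = (t == a) || (t == a + 1).
Proof. by move=> Xv t; rewrite e_sym (X_adj Xv). Qed.

Ltac distinct_vertices :=
  rewrite /= !inE;
  repeat match goal with
  | |- context [c ?s == c ?t] => rewrite (inj_eq (cycle_inj c_ind))
  | H : is_true (?v \in _) |- context [?v == c ?t] => rewrite (X_neq_cycle H)
  | H : is_true (?v \in _) |- context [c ?t == ?v] => rewrite (cycle_neq_X H)
  | H : is_true (?u \in _), H' : is_true (?v \in _) |- context [?u == ?v] =>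
      rewrite (X_neq H H' isT)
  | H : is_true (?u != ?v) |- context [?u == ?v] => rewrite (negbTE H)
  | H : is_true (?v != ?u) |- context [?u == ?v] => rewrite [u == v]eq_sym (negbTE H)
  end.

Ltac check_adjacency :=
  move=> [[|[|[|[|[|[|?]]]]]] ?] [[|[|[|[|[|[|?]]]]]] ?] //=;
  repeat match goal with
  | |- context [e (c ?s) (c ?t)] => rewrite (cycle_adj c_ind)
  | H : is_true (?v \in _) |- context [e ?v (c ?t)] => rewrite (X_adj H)
  | H : is_true (?v \in _) |- context [e (c ?t) ?v] => rewrite (X_adjC H)
  | H : is_true (e ?u ?v) |- context [e ?u ?v] => rewrite H
  | H : is_true (e ?v ?u) |- context [e ?u ?v] => rewrite (e_sym u v) H
  | H : e ?u ?v = _ |- context [e ?u ?v] => rewrite H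
  | H : e ?v ?u = _ |- context [e ?u ?v] => rewrite (e_sym u v) H
  end.

Lemma X0_clique x y : x \in Xset e c 0 -> y \in Xset e c 0 -> x != y -> e x y.
Proof.
move=> Xx Xy neq_xy; apply: contraT => /negbTE nxy; case: no_4K1.
apply: (has_induced_seq (x0 := x) (s := [:: c 2; c 4; x; y])) => //.
  by distinct_vertices.
by check_adjacency.
Qed.

Lemma X0_no_common_neighbour b x1 x2 y :
  x1 \in Xset e c 0 -> x2 \in Xset e c 0 -> x1 != x2 -> y \in Xset e c b -> b != 0 ->
  ~~ (e y x1 && e y x2).
Proof.
move=> X1 X2 n12 Yy nb; apply/negP => /andP [y1 y2].
have e12 := X0_clique X1 X2 n12.
case: b Yy nb => [[|[|[|[|[|//]]]]] lt_b5] Yy nb //.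
- case: no_K5_minus_e.
  apply: (has_induced_seq (x0 := y) (s := [:: c 0; y; c 1; x1; x2])) => //.
    by distinct_vertices.
  by check_adjacency.
- case: no_C5_twin.
  apply: (has_induced_seq (x0 := y) (s := [:: x1; c 0; c 4; c 3; y; x2])) => //.
    by distinct_vertices.
  by check_adjacency.
- case: no_C5_twin.
  apply: (has_induced_seq (x0 := y) (s := [:: x1; c 1; c 2; c 3; y; x2])) => //.
    by distinct_vertices.
  by check_adjacency.
- case: no_K5_minus_e.
  apply: (has_induced_seq (x0 := y) (s := [:: c 1; y; c 0; x1; x2])) => //.
    by distinct_vertices.
  by check_adjacency.
Qed.

Lemma X012_odd_triangle x y z :
  x \in Xset e c 0 -> y \in Xset e c 1 -> z \in Xset e c 2 -> odd_triangle e x y z.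
Proof.
move=> Xx Xy Xz; rewrite /odd_triangle.
case Exy: (e x y); case Eyz: (e y z); case Ezx: (e z x) => //=.
- case: no_P5_twin.
  apply: (has_induced_seq (x0 := x) (s := [:: c 4; c 0; c 1; y; z; x])) => //.
    by distinct_vertices.
  by check_adjacency.
- case: no_claw.
  apply: (has_induced_seq (x0 := x) (s := [:: x; c 0; y; z])) => //.
    by distinct_vertices.
  by check_adjacency.
- case: no_claw.
  apply: (has_induced_seq (x0 := x) (s := [:: z; c 3; x; y])) => //.
    by distinct_vertices.
  by check_adjacency.
- case: no_4K1.
  apply: (has_induced_seq (x0 := x) (s := [:: c 4; x; y; z])) => //.
    by distinct_vertices.
  by check_adjacency.
Qed.

End AroundClass0.

Section AnyClass.
Variables (T : finType) (e : rel T) (c : 'I_5 -> T).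
Hypotheses (e_simple : simple_graph e) (c_ind : induced_C5 e c).
Hypotheses (no_claw : ~ has_induced e claw) (no_4K1 : ~ has_induced e fourK1)
  (no_C5_twin : ~ has_induced e c5_twin) (no_P5_twin : ~ has_induced e p5_twin)
  (no_K5_minus_e : ~ has_induced e K5_minus_e).

Lemma X_no_common_neighbour a b x1 x2 y :
  x1 \in Xset e c a -> x2 \in Xset e c a -> x1 != x2 -> y \in Xset e c b -> b != a ->
  ~~ (e y x1 && e y x2).
Proof.
have := X0_no_common_neighbour e_simple (induced_C5_rot a c_ind)
  no_4K1 no_C5_twin no_K5_minus_e.
move=> common X1 X2 n12 Yy nba; apply: (common (b - a)%R).
all: by rewrite ?subr_eq0 ?Xset_rot ?subrK ?add0r.
Qed.

Lemma X_odd_triangle a x y z :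
  x \in Xset e c a -> y \in Xset e c (succ5 a) -> z \in Xset e c (succ5 (succ5 a)) ->
  odd_triangle e x y z.
Proof.
have := X012_odd_triangle e_simple (induced_C5_rot a c_ind) no_claw no_4K1 no_P5_twin.
have -> : succ5 (succ5 a) = (2 + a)%R by rewrite !succ5E -addrA addrC.
by rewrite !Xset_rot add0r succ5E addrC; apply.
Qed.

Lemma card_X_neighbours_le1 a b y :
  y \in Xset e c b -> b != a -> #|Xset e c a :&: [set x | e y x]| <= 1.
Proof.
move=> Yy nba; rewrite leqNgt; apply/card_gt1P.
move=> -[x1 [x2 [/setIP [X1 +] /setIP [X2 +] n12]]]; rewrite !inE => yx1 yx2.
by have := X_no_common_neighbour X1 X2 n12 Yy nba; rewrite yx1 yx2.
Qed.

Lemma X_odd_triangle_perm i j k l u w z :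
  [set j; k; l] = [set i; succ5 i; succ5 (succ5 i)] -> uniq [:: j; k; l] ->
  u \in Xset e c j -> w \in Xset e c k -> z \in Xset e c l -> odd_triangle e u w z.
Proof.
move=> classes; have swap := odd_triangle_swap e_simple.1.
have cls m : m \in [set j; k; l] -> [|| m == i, m == succ5 i | m == succ5 (succ5 i)].
  by rewrite classes !inE -orbA.
have mem_jkl : [/\ j \in [set j; k; l], k \in [set j; k; l] & l \in [set j; k; l]].
  by rewrite !inE !eqxx ?orbT.
case: mem_jkl => /cls + /cls + /cls.
move=> /or3P[] /eqP-> /or3P[] /eqP-> /or3P[] /eqP->.
all: rewrite /= ?in_cons ?eqxx ?orbT /= ?andbF // => _ Xu Xw Xz.
- exact: X_odd_triangle Xu Xw Xz.
- by rewrite swap; apply: X_odd_triangle Xu Xz Xw.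
- by rewrite swap -odd_triangle_rot; apply: X_odd_triangle Xw Xu Xz.
- by rewrite 2!odd_triangle_rot; apply: X_odd_triangle Xz Xu Xw.
- by rewrite odd_triangle_rot; apply: X_odd_triangle Xw Xz Xu.
- by rewrite swap odd_triangle_rot; apply: X_odd_triangle Xz Xw Xu.
Qed.

Lemma card_X_le1 i j k l :
  [set j; k; l] = [set i; succ5 i; succ5 (succ5 i)] -> uniq [:: j; k; l] ->
  3 <= #|Xset e c j| -> Xset e c l != set0 -> #|Xset e c k| <= 1.
Proof.
move=> classes uniq_jkl big_j /set0Pn [z Xz].
have [nkj nlj nlk] : [/\ k != j, l != j & l != k].
  move: uniq_jkl; rewrite /= !inE !negb_or !andbT ![j == _]eq_sym [k == l]eq_sym.
  by case/andP => /andP [-> ->] ->.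
rewrite leqNgt; apply/card_gt1P => -[w1 [w2 [Xw1 Xw2 nw12]]].
have [w Xw nzw] : exists2 w, w \in Xset e c k & ~~ e z w.
  have := X_no_common_neighbour Xw1 Xw2 nw12 Xz nlk.
  by case/nandP => ?; [exists w1 | exists w2].
have sub : Xset e c j :\: [set u | e z u] \subset Xset e c j :&: [set u | e w u].
  apply/subsetP => u /setDP [Xu]; rewrite inE => nzu; rewrite in_setI Xu inE.
  have := X_odd_triangle_perm classes uniq_jkl Xu Xw Xz.
  rewrite /odd_triangle (e_simple.1 w z) (negbTE nzw) (negbTE nzu) !addbF.
  by rewrite e_simple.1.
have nz := card_X_neighbours_le1 Xz nlj.
have nw := card_X_neighbours_le1 Xw nkj.
rewrite -(cardsID [set u | e z u]) in big_j.
by have := leq_trans big_j (leq_add nz (leq_trans (subset_leq_card sub) nw)).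
Qed.

End AnyClass.

Theorem claim19 (T : finType) (e : rel T) (c : 'I_5 -> T) (i j k l : 'I_5) :
  simple_graph e -> connected_graph e -> in_class_C e -> induced_C5 e c ->
  Xset e c i != set0 -> Xset e c (succ5 i) != set0 ->
  Xset e c (succ5 (succ5 i)) != set0 ->
  [set j; k; l] = [set i; succ5 i; succ5 (succ5 i)] ->
  uniq [:: j; k; l] ->
  3 <= #|Xset e c j| ->
  #|Xset e c k| = 1 /\ #|Xset e c l| = 1.
Proof.
move=> e_simple _ [no_claw [no_4K1 [_ [no_C5_twin [no_P5_twin no_K5_minus_e]]]]] c_ind.
move=> X0 X1 X2 classes uniq_jkl big_j.
have nonempty m : m \in [set j; k; l] -> Xset e c m != set0.
  by rewrite classes !inE -orbA => /or3P [] /eqP ->.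
have [Xk Xl] : Xset e c k != set0 /\ Xset e c l != set0.
  by split; apply: nonempty; rewrite !inE eqxx ?orbT.
have classes' : [set j; l; k] = [set i; succ5 i; succ5 (succ5 i)].
  by rewrite -classes setUAC.
have uniq_jlk : uniq [:: j; l; k].
  by move: uniq_jkl; rewrite /= !in_cons in_nil !orbF orbC [l == k]eq_sym.
have card_le1 :=
  card_X_le1 e_simple c_ind no_claw no_4K1 no_C5_twin no_P5_twin no_K5_minus_e.
split; apply/eqP; rewrite eqn_leq card_gt0 ?Xk ?Xl andbT.
- exact: card_le1 classes uniq_jkl big_j Xl.
- exact: card_le1 classes' uniq_jlk big_j Xk.
Qed.
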